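(* Let $I$ and $J$ be intervals of $B$. - If $I,J\in\mathcal{L}$, then $\mathrm{Hom}_B(k_I,k_J)\ne0$ if and only if $J\subseteq I$. - If $I,J\in\mathcal{R}$, then $\mathrm{Hom}_B(k_I,k_J)\ne0$ if and only if $I\subseteq J$.
   Context: Let $k$ be a field. The bipath poset $B$ has underlying set $(\mathbb{R}\times\{1,2\})\sqcup\{-\infty,+\infty\}$. Its order is: $x\le y$ iff $x=-\infty$, or $y=+\infty$, or $x=(s,i)$, $y=(t,i)$ with the same $i$ and $s\le t$. $B$-persistence modules are functors from $B$ (as a category) to $k$-vector spaces; $\mathrm{Hom}_B$ denotes natural transformations. An interval of $B$ is a nonempty convex and connected subset (convex: $p,q\in I$, $p\le r\le q$ imply $r\in I$; connected: any two elements are joined by a finite sequence in $I$ with consecutive ones comparable). The interval module $k_I$ is $k$ on $I$ and $0$ elsewhere, with identity maps within $I$ and zero maps otherwise. $\mathcal{L}$ is the set of intervals $\neq B$ containing $-\infty$; $\mathcal{R}$ is the set of intervals $\neq B$ containing $+\infty$. *)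

From Stdlib Require Import Reals.
From HB Require Import structures.
From mathcomp Require Import all_boot all_order all_algebra.
From mathcomp Require Import boolp.
Set Implicit Arguments. Unset Strict Implicit. Unset Printing Implicit Defensive.
Import GRing.Theory.

(* The bipath poset B = (R x {1,2}) ⊔ {-oo,+oo}; the index i in {1,2} is a bool. *)
Inductive bip : Type :=
| bot : bip
| top : bip
| pt : R -> bool -> bip.

Definition ble (x y : bip) : Prop :=
  match x, y with
  | bot, _ => True
  | _, top => True
  | pt s i, pt t j => i = j /\ Rle s t
  | _, _ => False
  end.

(* connectivity inside I: a finite sequence in I with consecutive comparable *)
Inductive zigzag (I : bip -> Prop) : bip -> bip -> Prop :=
| zz_refl x : I x -> zigzag I x x
| zz_step x y z : I x -> (ble x y \/ ble y x) -> zigzag I y z -> zigzag I x z.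

Definition is_interval (I : bip -> Prop) : Prop :=
  (exists p, I p) /\
  (forall p q r, I p -> I q -> ble p r -> ble r q -> I r) /\
  (forall p q, I p -> I q -> zigzag I p q).

Definition subsetB (I J : bip -> Prop) : Prop := forall p, I p -> J p.

Definition in_L (I : bip -> Prop) : Prop :=
  is_interval I /\ (exists p, ~ I p) /\ I bot.
Definition in_R (I : bip -> Prop) : Prop :=
  is_interval I /\ (exists p, ~ I p) /\ I top.

Record pmod (k : fieldType) := PMod {
  pobj : bip -> lmodType k;
  pmap : forall p q : bip, {linear pobj p -> pobj q}
}.

Definition is_functor (k : fieldType) (V : pmod k) : Prop :=
  (forall p (v : pobj V p), pmap V p p v = v) /\
  (forall p q r (v : pobj V p), ble p q -> ble q r ->
      pmap V q r (pmap V p q v) = pmap V p r v).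

Definition is_nat_trans (k : fieldType) (V W : pmod k)
  (eta : forall p, {linear pobj V p -> pobj W p}) : Prop :=
  forall p q (v : pobj V p), ble p q ->
    eta q (pmap V p q v) = pmap W p q (eta p v).

Definition hom_nonzero (k : fieldType) (V W : pmod k) : Prop :=
  exists eta : forall p, {linear pobj V p -> pobj W p},
    is_nat_trans eta /\ exists p (v : pobj V p), eta p v != GRing.zero.

(* Interval module k_I: the space at p is 'rV[k]_1 (= k) if p \in I and
   'rV[k]_0 (= 0) otherwise; the structure map p -> q is right multiplication
   by the all-ones (d p) x (d q) matrix, i.e. the identity of k when p, q \in I
   and the zero map otherwise. *)
Definition idim (I : bip -> Prop) (p : bip) : nat := nat_of_bool `[< I p >].

Definition intmod (k : fieldType) (I : bip -> Prop) : pmod k :=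
  @PMod k (fun p => 'rV[k]_(idim I p))
    (fun p q => mulmxr (const_mx (GRing.one k) : 'M[k]_(idim I p, idim I q))).

(* A natural transformation [eta : k_I -> k_J] between interval modules is
   supported on [I ∩ J], and on the points of [I ∩ J] it is one and the same
   scalar, transported along the identity structure maps.  For [I, J] in [L]
   everything lies above [-oo ∈ I ∩ J], so a nonzero [eta] is nonzero at
   [-oo]; a point [q ∈ J \ I] would force the naturality square [-oo <= q]
   to factor through [k_I(q) = 0], killing [eta] at [-oo].  Hence [J ⊆ I];
   conversely, if [J ⊆ I] the identity of [k] on [I ∩ J = J] is natural
   because [J] is convex.  The case of [R] is dual, with [+oo] in place of
   [-oo] and the roles of [I] and [J] exchanged. *)
From Stdlib Require Import Reals.
From mathcomp Require Import all_boot all_algebra.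
From mathcomp Require Import boolp.
Set Implicit Arguments. Unset Strict Implicit. Unset Printing Implicit Defensive.
Import GRing.Theory.
Local Open Scope ring_scope.

Lemma ble_bot p : ble bot p.
Proof. by []. Qed.

Lemma ble_top p : ble p top.
Proof. by case: p. Qed.

Lemma idim_in I p : I p -> idim I p = 1%N.
Proof. by rewrite /idim; case: asboolP. Qed.

Lemma idim_out I p : ~ I p -> idim I p = 0%N.
Proof. by rewrite /idim; case: asboolP. Qed.

(* Both [pmap (intmod k I) p q] and [pmap (intmod k J) p q] act by right
   multiplication by an all-ones matrix, so naturality of [eta] along [p <= q]
   is a square of the following shape. *)
Definition const_square {k : fieldType} {a1 a2 b1 b2} (f : 'rV[k]_a1 -> 'rV[k]_b1)
    (g : 'rV[k]_a2 -> 'rV[k]_b2) :=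
  forall v, g (v *m const_mx 1) = f v *m const_mx 1.

Lemma idim_out_rV0 (k : fieldType) I p (v : 'rV[k]_(idim I p)) : ~ I p -> v = 0.
Proof. by move=> nIp; move: v; rewrite (idim_out nIp) => v; apply: thinmx0. Qed.

Section ConstSquare.
Variable k : fieldType.

Lemma mulmx_const1_id (v : 'rV[k]_1) : v *m const_mx 1 = v.
Proof. by rewrite [const_mx 1]mx11_scalar mxE mulmx1. Qed.

Variables (a1 a2 b1 b2 : nat).
Variables (f : {linear 'rV[k]_a1 -> 'rV[k]_b1}) (g : {linear 'rV[k]_a2 -> 'rV[k]_b2}).
Hypothesis fg : const_square f g.

Lemma const_square_vanish_src :
  a1 = 1%N -> a2 = 1%N -> b1 = 1%N -> b2 = 1%N ->
  (forall v, g v = 0) -> forall v, f v = 0.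
Proof.
move=> ????; subst => g0 v.
by rewrite -[f v]mulmx_const1_id -fg g0.
Qed.

Lemma const_square_vanish_tgt :
  a1 = 1%N -> a2 = 1%N -> b1 = 1%N -> b2 = 1%N ->
  (forall v, f v = 0) -> forall v, g v = 0.
Proof.
move=> ????; subst => f0 v.
by rewrite -[v]mulmx_const1_id fg f0 mul0mx.
Qed.

Lemma const_square_src_vanish : a2 = 0%N -> b1 = 1%N -> b2 = 1%N ->
  forall v, f v = 0.
Proof.
move=> ???; subst => v.
by rewrite -[f v]mulmx_const1_id -fg thinmx0 linear0.
Qed.

Lemma const_square_tgt_vanish : a1 = 1%N -> a2 = 1%N -> b1 = 0%N ->
  forall v, g v = 0.
Proof.
move=> ???; subst => v.
by rewrite -[v]mulmx_const1_id fg thinmx0 mul0mx.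
Qed.

End ConstSquare.

Section NatTrans.
Variables (k : fieldType) (I J : bip -> Prop).
Variable eta : forall p, {linear pobj (intmod k I) p -> pobj (intmod k J) p}.
Hypothesis eta_nat : is_nat_trans eta.

Definition vanishes_at p := forall v, eta p v = 0.

Lemma nat_trans_square p q : ble p q -> const_square (eta p) (eta q).
Proof. by move=> pq v; apply: eta_nat. Qed.

Lemma vanishes_outside p : ~ (I p /\ J p) -> vanishes_at p.
Proof.
move=> nIJ v; have [Ip|nIp] := pselect (I p); last by rewrite [v]idim_out_rV0 // linear0.
have [Jp|nJp] := pselect (J p); last exact: idim_out_rV0.
by case: nIJ.
Qed.

Lemma vanishes_up p q : ble p q -> I p -> I q -> J p -> J q ->
  vanishes_at p -> vanishes_at q.
Proof.
move=> pq Ip Iq Jp Jq.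
exact: const_square_vanish_tgt (nat_trans_square pq)
  (idim_in Ip) (idim_in Iq) (idim_in Jp) (idim_in Jq).
Qed.

Lemma vanishes_down p q : ble p q -> I p -> I q -> J p -> J q ->
  vanishes_at q -> vanishes_at p.
Proof.
move=> pq Ip Iq Jp Jq.
exact: const_square_vanish_src (nat_trans_square pq)
  (idim_in Ip) (idim_in Iq) (idim_in Jp) (idim_in Jq).
Qed.

Lemma vanishes_below_exit p q : ble p q -> J p -> J q -> ~ I q ->
  vanishes_at p.
Proof.
move=> pq Jp Jq nIq.
exact: const_square_src_vanish (nat_trans_square pq)
  (idim_out nIq) (idim_in Jp) (idim_in Jq).
Qed.

Lemma vanishes_above_entry p q : ble p q -> I p -> I q -> ~ J p ->
  vanishes_at q.
Proof.
move=> pq Ip Iq nJp.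
exact: const_square_tgt_vanish (nat_trans_square pq)
  (idim_in Ip) (idim_in Iq) (idim_out nJp).
Qed.

End NatTrans.

Definition intmod_ones k I J p :
    {linear pobj (intmod k I) p -> pobj (intmod k J) p} :=
  mulmxr (const_mx 1).

Lemma intmod_ones_nat k I J :
  (forall p q, ble p q -> I p -> J q -> I q /\ J p) ->
  is_nat_trans (intmod_ones k I J).
Proof.
move=> IJ p q v pq /=.
have [Ip|nIp] := pselect (I p); last by rewrite [v]idim_out_rV0 // !mul0mx.
have [Jq|nJq] := pselect (J q); last by rewrite [LHS]idim_out_rV0 // [RHS]idim_out_rV0.
have [Iq Jp] := IJ p q pq Ip Jq.
by rewrite (idim_in Iq) (idim_in Jp).
Qed.

Lemma intmod_ones_neq0 k I J p : I p -> J p ->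
  intmod_ones k I J p (const_mx 1) != 0.
Proof.
rewrite /intmod_ones /= => /idim_in -> /idim_in ->.
by rewrite mulmx_const1_id; apply/eqP => /rowP/(_ 0); rewrite !mxE; apply/eqP/oner_neq0.
Qed.

Lemma hom_nonzero_intmod k I J m :
  (forall p q, ble p q -> I p -> J q -> I q /\ J p) -> I m -> J m ->
  hom_nonzero (intmod k I) (intmod k J).
Proof.
move=> IJ Im Jm; exists (intmod_ones k I J); split; first exact: intmod_ones_nat.
by exists m, (const_mx 1); apply: intmod_ones_neq0.
Qed.

Lemma hom_nonzero_support k I J : hom_nonzero (intmod k I) (intmod k J) ->
  exists eta : forall p, {linear pobj (intmod k I) p -> pobj (intmod k J) p},
    is_nat_trans eta /\ exists p, [/\ I p, J p & ~ vanishes_at eta p].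
Proof.
move=> [eta [nat_eta [p [v etav]]]]; exists eta; split => //.
have nvp : ~ vanishes_at eta p by move=> /(_ v) eta0; rewrite eta0 eqxx in etav.
have [[Ip Jp]|nIJ] := pselect (I p /\ J p); last by case: nvp; apply: vanishes_outside.
by exists p.
Qed.

Lemma hom_nonzero_L k I J : in_L I -> in_L J ->
  hom_nonzero (intmod k I) (intmod k J) <-> subsetB J I.
Proof.
move=> [_ [_ Ib]] [[_ [cJ _]] [_ Jb]]; split.
  move=> /hom_nonzero_support [eta [nat_eta [p [Ip Jp nvp]]]] q Jq.
  apply: contrapT => nIq; apply: nvp.
  apply: (vanishes_up nat_eta (ble_bot p) Ib Ip Jb Jp).
  exact: (vanishes_below_exit nat_eta (ble_bot q) Jb Jq nIq).
move=> JI; apply: (hom_nonzero_intmod k _ Ib Jb) => p q pq _ Jq.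
by split; [apply: JI | apply: (cJ _ _ _ Jb Jq (ble_bot p) pq)].
Qed.

Lemma hom_nonzero_R k I J : in_R I -> in_R J ->
  hom_nonzero (intmod k I) (intmod k J) <-> subsetB I J.
Proof.
move=> [[_ [cI _]] [_ It]] [_ [_ Jt]]; split.
  move=> /hom_nonzero_support [eta [nat_eta [p [Ip Jp nvp]]]] q Iq.
  apply: contrapT => nJq; apply: nvp.
  apply: (vanishes_down nat_eta (ble_top p) Ip It Jp Jt).
  exact: (vanishes_above_entry nat_eta (ble_top q) Iq It nJq).
move=> IJ; apply: (hom_nonzero_intmod k _ It Jt) => p q pq Ip _.
by split; [apply: (cI _ _ _ Ip It pq (ble_top q)) | apply: IJ].
Qed.

Theorem lemma4p7 (k : fieldType) (I J : bip -> Prop) :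
  is_interval I -> is_interval J ->
  (in_L I -> in_L J -> (hom_nonzero (intmod k I) (intmod k J) <-> subsetB J I)) /\
  (in_R I -> in_R J -> (hom_nonzero (intmod k I) (intmod k J) <-> subsetB I J)).
Proof.
by move=> _ _; split; [apply: hom_nonzero_L | apply: hom_nonzero_R].
Qed.
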